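(* For all $0<x<\pi/2$, \[ \frac{\frac{2\pi^4}{3}x^3+\left(\frac{8\pi^4}{15}-\frac{16\pi^2}{3}\right)x^5}{(\pi^2-4x^2)^2}<x\sec^2x-\tan x<\frac{\frac{2\pi^4}{3}x^3+\left(\frac{256}{\pi^2}-\frac{8\pi^2}{3}\right)x^5}{(\pi^2-4x^2)^2}, \] and the constants $\frac{8\pi^4}{15}-\frac{16\pi^2}{3}$ and $\frac{256}{\pi^2}-\frac{8\pi^2}{3}$ are the best possible. *)

From Stdlib Require Import Reals.
Open Scope R_scope.

Definition fsec (x : R) : R := x * (1 / (cos x) ^ 2) - tan x.

Definition bnd (c x : R) : R :=
  (2 * PI ^ 4 / 3 * x ^ 3 + c * x ^ 5) / (PI ^ 2 - 4 * x ^ 2) ^ 2.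

Definition c_low : R := 8 * PI ^ 4 / 15 - 16 * PI ^ 2 / 3.
Definition c_up  : R := 256 / PI ^ 2 - 8 * PI ^ 2 / 3.

(* With [t = 2 x], [x sec^2 x - tan x = (t - sin t) / (1 + cos t)] and the bounds read
   [(pi^4 t^3 / 12 + c t^5 / 32) / (pi^2 - t^2)^2], so each inequality says that
   [gap c t = (pi^2 - t^2)^2 (t - sin t) - (1 + cos t) (pi^4 t^3 / 12 + c t^5 / 32)]
   has a constant sign on [(0, pi)].  Replacing sine and cosine by Taylor polynomials
   that bound them from the appropriate side bounds [gap] by polynomials in [t] and
   [pi] (in [s = pi - t] on [[pi/2, pi)]); after dividing out their zero at the
   endpoint, their positivity is certified by exact rational arithmetic on boxes,
   with pi enclosed in [[3.14159, 3.14160]].  The constants are sharp because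
   [gap c_low] vanishes to order 7 at [t = 0] and [gap c_up] to order 3 at [t = pi],
   whereas changing [c] moves [gap] by order 5 at [0] and by order 2 at [pi]. *)

From Stdlib Require Import Reals QArith Qreals Qminmax Lra Lia List.
Open Scope R_scope.

Arguments Q2R : simpl never.
Arguments Qred : simpl never.
Arguments Qplus : simpl never.
Arguments Qmult : simpl never.

Lemma Q2R_red q : Q2R (Qred q) = Q2R q.
Proof. apply Qeq_eqR, Qred_correct. Qed.

Lemma Q2R_Qmake n d : Q2R (Qmake n d) = IZR n / IZR (Zpos d).
Proof. reflexivity. Qed.

(** * Polynomials with rational coefficients *)

Notation upoly := (list Q) (only parsing).

Fixpoint ueval (l : upoly) (x : R) : R :=
  match l with nil => 0 | c :: l' => Q2R c + x * ueval l' x end.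

Fixpoint uadd (l m : upoly) : upoly :=
  match l, m with
  | nil, _ => m
  | _, nil => l
  | a :: l', b :: m' => Qred (a + b) :: uadd l' m'
  end.

Lemma ueval_add l m x : ueval (uadd l m) x = ueval l x + ueval m x.
Proof.
  revert m; induction l as [|a l IH]; intros [|b m]; simpl; try lra.
  rewrite IH, Q2R_red, Q2R_plus; ring.
Qed.
Arguments uadd : simpl never.

Definition uscale (a : Q) (l : upoly) : upoly := map (fun c => Qred (a * c)) l.

Lemma ueval_scale a l x : ueval (uscale a l) x = Q2R a * ueval l x.
Proof.
  induction l as [|c l IH]; simpl; [ring|].
  rewrite IH, Q2R_red, Q2R_mult; ring.
Qed.
Arguments uscale : simpl never.

Fixpoint umul (l m : upoly) : upoly :=
  match l with nil => nil | a :: l' => uadd (uscale a m) (0%Q :: umul l' m) end.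

Lemma ueval_mul l m x : ueval (umul l m) x = ueval l x * ueval m x.
Proof.
  induction l as [|a l IH]; simpl; [ring|].
  rewrite ueval_add, ueval_scale; simpl; rewrite IH, RMicromega.Q2R_0; ring.
Qed.
Arguments umul : simpl never.

Fixpoint ucomp (l s : upoly) : upoly :=
  match l with nil => nil | c :: l' => uadd (c :: nil) (umul s (ucomp l' s)) end.

Lemma ueval_comp l s x : ueval (ucomp l s) x = ueval l (ueval s x).
Proof.
  induction l as [|c l IH]; simpl; [ring|].
  rewrite ueval_add, ueval_mul, IH; simpl; ring.
Qed.
Arguments ucomp : simpl never.

(* Polynomials in [u] whose coefficients are polynomials in [v]. *)
Notation bpoly := (list (list Q)) (only parsing).

Fixpoint beval (L : bpoly) (u v : R) : R :=
  match L with nil => 0 | c :: L' => ueval c v + u * beval L' u v end.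

Fixpoint badd (L M : bpoly) : bpoly :=
  match L, M with
  | nil, _ => M
  | _, nil => L
  | a :: L', b :: M' => uadd a b :: badd L' M'
  end.

Lemma beval_add L M u v : beval (badd L M) u v = beval L u v + beval M u v.
Proof.
  revert M; induction L as [|a L IH]; intros [|b M]; simpl; try lra.
  rewrite IH, ueval_add; ring.
Qed.
Arguments badd : simpl never.

Definition bscale (c : upoly) (L : bpoly) : bpoly := map (umul c) L.

Lemma beval_scale c L u v : beval (bscale c L) u v = ueval c v * beval L u v.
Proof.
  induction L as [|a L IH]; simpl; [ring|].
  rewrite IH, ueval_mul; ring.
Qed.
Arguments bscale : simpl never.

Fixpoint bmul (L M : bpoly) : bpoly :=
  match L with nil => nil | c :: L' => badd (bscale c M) (nil :: bmul L' M) end.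

Lemma beval_mul L M u v : beval (bmul L M) u v = beval L u v * beval M u v.
Proof.
  induction L as [|a L IH]; simpl; [ring|].
  rewrite beval_add, beval_scale; simpl; rewrite IH; ring.
Qed.
Arguments bmul : simpl never.

Definition bsub (L M : bpoly) : bpoly := badd L (bscale ((-1)%Q :: nil) M).

Lemma beval_sub L M u v : beval (bsub L M) u v = beval L u v - beval M u v.
Proof.
  unfold bsub; rewrite beval_add, beval_scale; simpl.
  unfold Q2R; simpl; field.
Qed.

Definition bconst (q : Q) : bpoly := (q :: nil) :: nil.
Definition bX_u : bpoly := nil :: (1%Q :: nil) :: nil.
Definition bX_v : bpoly := (0%Q :: 1%Q :: nil) :: nil.

Lemma beval_const q u v : beval (bconst q) u v = Q2R q.
Proof. simpl; ring. Qed.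

Lemma beval_X_u u v : beval bX_u u v = u.
Proof. simpl; rewrite RMicromega.Q2R_1; ring. Qed.

Lemma beval_X_v u v : beval bX_v u v = v.
Proof. simpl; rewrite RMicromega.Q2R_0, RMicromega.Q2R_1; ring. Qed.

Fixpoint bpow (L : bpoly) (n : nat) : bpoly :=
  match n with O => bconst 1 | S m => bmul L (bpow L m) end.

Lemma beval_pow L n u v : beval (bpow L n) u v = beval L u v ^ n.
Proof.
  induction n as [|n IH]; simpl.
  - rewrite RMicromega.Q2R_1; ring.
  - rewrite beval_mul, IH; ring.
Qed.
Arguments bpow : simpl never.

Fixpoint bcomp (L S : bpoly) : bpoly :=
  match L with nil => nil | c :: L' => badd (c :: nil) (bmul S (bcomp L' S)) end.

Lemma beval_comp L S u v : beval (bcomp L S) u v = beval L (beval S u v) v.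
Proof.
  induction L as [|c L IH]; simpl; [ring|].
  rewrite beval_add, beval_mul, IH; simpl; ring.
Qed.
Arguments bcomp : simpl never.

Definition bshift_u (L : bpoly) (a : Q) : bpoly :=
  bcomp L (badd (bconst a) bX_u).

Lemma beval_shift_u L a u v : beval (bshift_u L a) u v = beval L (Q2R a + u) v.
Proof. unfold bshift_u; rewrite beval_comp, beval_add, beval_const, beval_X_u; reflexivity. Qed.

Definition bshift_v (L : bpoly) (b : Q) : bpoly :=
  map (fun c => ucomp c (b :: 1%Q :: nil)) L.

Lemma beval_shift_v L b u w : beval (bshift_v L b) u w = beval L u (Q2R b + w).
Proof.
  induction L as [|c L IH]; simpl; [ring|].
  rewrite IH, ueval_comp; simpl; rewrite RMicromega.Q2R_1.
  do 3 f_equal; ring.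
Qed.

Lemma beval_skipn k L u v :
  forallb (forallb (Qeq_bool 0)) (firstn k L) = true ->
  beval L u v = u ^ k * beval (skipn k L) u v.
Proof.
  revert L; induction k as [|k IH]; intros [|c L] Hzero; simpl; try ring.
  simpl in Hzero; apply andb_true_iff in Hzero as [Hc HL].
  rewrite (IH L HL).
  replace (ueval c v) with 0; [ring|].
  induction c as [|a c IHc]; simpl; [reflexivity|].
  simpl in Hc; apply andb_true_iff in Hc as [Ha Hc].
  rewrite <- IHc, <- (RMicromega.Qeq_true _ _ Ha), RMicromega.Q2R_0 by exact Hc; ring.
Qed.

(** * Certified lower bounds on boxes *)

(* On [0, e], [c0 + c1 x + ...] is at least [c0] plus [e] times a Horner
   evaluation at [e] that keeps only the negative coefficients. *)
Fixpoint uneg_bound (l : upoly) (e : Q) : Q :=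
  match l with nil => 0%Q | c :: l' => Qred (Qmin c 0 + e * uneg_bound l' e) end.

Lemma Q2R_min_0 c : Q2R (Qmin c 0) <= 0 /\ Q2R (Qmin c 0) <= Q2R c.
Proof.
  rewrite <- RMicromega.Q2R_0 at 1.
  split; apply Qle_Rle; [apply Q.le_min_r | apply Q.le_min_l].
Qed.

Lemma uneg_bound_nonpos l e : 0 <= Q2R e -> Q2R (uneg_bound l e) <= 0.
Proof.
  intros He; induction l as [|c l IH]; simpl; [rewrite RMicromega.Q2R_0; lra|].
  rewrite Q2R_red, Q2R_plus, Q2R_mult. destruct (Q2R_min_0 c). nra.
Qed.

Lemma uneg_bound_le l e x : 0 <= x <= Q2R e -> Q2R (uneg_bound l e) <= ueval l x.
Proof.
  intros Hx; induction l as [|c l IH]; simpl; [rewrite RMicromega.Q2R_0; lra|].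
  rewrite Q2R_red, Q2R_plus, Q2R_mult. destruct (Q2R_min_0 c).
  pose proof (uneg_bound_nonpos l e ltac:(lra)). nra.
Qed.

Definition ulower_bound (l : upoly) (e : Q) : Q :=
  match l with nil => 0%Q | c :: l' => Qred (c + e * uneg_bound l' e) end.

Lemma ulower_bound_le l e x : 0 <= x <= Q2R e -> Q2R (ulower_bound l e) <= ueval l x.
Proof.
  intros Hx; destruct l as [|c l]; simpl; [rewrite RMicromega.Q2R_0; lra|].
  rewrite Q2R_red, Q2R_plus, Q2R_mult.
  pose proof (uneg_bound_nonpos l e ltac:(lra)). pose proof (uneg_bound_le l e x Hx). nra.
Qed.

Fixpoint bneg_bound (L : bpoly) (d e : Q) : Q :=
  match L with nil => 0%Q | c :: L' => Qred (uneg_bound c e + d * bneg_bound L' d e) end.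

Lemma bneg_bound_nonpos L d e : 0 <= Q2R d -> 0 <= Q2R e -> Q2R (bneg_bound L d e) <= 0.
Proof.
  intros Hd He; induction L as [|c L IH]; simpl; [rewrite RMicromega.Q2R_0; lra|].
  rewrite Q2R_red, Q2R_plus, Q2R_mult. pose proof (uneg_bound_nonpos c e He). nra.
Qed.

Lemma bneg_bound_le L d e u v : 0 <= u <= Q2R d -> 0 <= v <= Q2R e ->
  Q2R (bneg_bound L d e) <= beval L u v.
Proof.
  intros Hu Hv; induction L as [|c L IH]; simpl; [rewrite RMicromega.Q2R_0; lra|].
  rewrite Q2R_red, Q2R_plus, Q2R_mult. pose proof (uneg_bound_le c e v Hv).
  pose proof (bneg_bound_nonpos L d e ltac:(lra) ltac:(lra)). nra.
Qed.

Definition blower_bound (L : bpoly) (d e : Q) : Q :=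
  match L with nil => 0%Q | c :: L' => Qred (ulower_bound c e + d * bneg_bound L' d e) end.

Lemma blower_bound_le L d e u v : 0 <= u <= Q2R d -> 0 <= v <= Q2R e ->
  Q2R (blower_bound L d e) <= beval L u v.
Proof.
  intros Hu Hv; destruct L as [|c L]; simpl; [rewrite RMicromega.Q2R_0; lra|].
  rewrite Q2R_red, Q2R_plus, Q2R_mult. pose proof (ulower_bound_le c e v Hv).
  pose proof (bneg_bound_le L d e u v Hu Hv).
  pose proof (bneg_bound_nonpos L d e ltac:(lra) ltac:(lra)). nra.
Qed.

(* Checks positivity on [a, b1] x V, [b1, b2] x V, ..., with V = [v0, v0 + e]. *)
Fixpoint pos_on_boxes (L : bpoly) (v0 e a : Q) (bs : list Q) : bool :=
  match bs with
  | nil => false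
  | b :: bs' =>
      QMicromega.Qlt_bool 0 (blower_bound (bshift_v (bshift_u L a) v0) (b - a) e) &&
      match bs' with nil => true | _ => pos_on_boxes L v0 e b bs' end
  end.

Lemma last_cons_default {A} (x : A) l d d' : last (x :: l) d = last (x :: l) d'.
Proof.
  revert x; induction l as [|y l IH]; intros x; [reflexivity|].
  exact (IH y).
Qed.

Lemma pos_on_boxes_spec L v0 e a bs u v :
  pos_on_boxes L v0 e a bs = true -> Q2R v0 <= v <= Q2R v0 + Q2R e ->
  Q2R a <= u <= Q2R (last bs a) -> 0 < beval L u v.
Proof.
  revert a; induction bs as [|b bs IH]; intros a Hcheck Hv Hu; [discriminate|].
  simpl in Hcheck; apply andb_true_iff in Hcheck as [Hbox Hrest].
  destruct (Rle_dec u (Q2R b)) as [Hub|Hub].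
  - apply QMicromega.Qlt_bool_iff, Qlt_Rlt in Hbox. rewrite RMicromega.Q2R_0 in Hbox.
    replace u with (Q2R a + (u - Q2R a)) by ring.
    replace v with (Q2R v0 + (v - Q2R v0)) by ring.
    rewrite <- beval_shift_u, <- beval_shift_v.
    eapply Rlt_le_trans; [exact Hbox|]. apply blower_bound_le; [|lra].
    rewrite Q2R_minus. lra.
  - destruct bs as [|b' bs]; [simpl in Hu; lra|].
    apply (IH b); auto. split; [lra|].
    rewrite (last_cons_default b' bs b a). exact (proj2 Hu).
Qed.

(* Computing [fact 13] in unary [nat] would be infeasible. *)
Fixpoint zfact (n : nat) : Z :=
  match n with O => 1%Z | S m => (Z.of_nat (S m) * zfact m)%Z end.

Lemma zfact_pos n : (0 < zfact n)%Z.
Proof.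
  induction n as [|n IH]; [reflexivity|].
  change (0 < Z.of_nat (S n) * zfact n)%Z. apply Z.mul_pos_pos; lia.
Qed.

Lemma IZR_zfact n : IZR (zfact n) = INR (Factorial.fact n).
Proof.
  induction n as [|n IH]; [reflexivity|].
  change (IZR (Z.of_nat (S n) * zfact n) = INR (S n * Factorial.fact n)).
  rewrite mult_IZR, IH, mult_INR, <- INR_IZR_INZ. reflexivity.
Qed.

Definition bmonomial (k : nat) (c : Q) : bpoly := repeat nil k ++ ((c :: nil) :: nil).

Lemma beval_monomial k c u v : beval (bmonomial k c) u v = Q2R c * u ^ k.
Proof. unfold bmonomial; induction k as [|k IH]; simpl; [ring|]. rewrite IH; ring. Qed.

Definition taylor_coef (i k : nat) : Q := Qmake ((-1) ^ Z.of_nat i) (Z.to_pos (zfact k)).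

Lemma Q2R_taylor_coef i k : Q2R (taylor_coef i k) = (-1) ^ i / INR (Factorial.fact k).
Proof.
  unfold taylor_coef; rewrite Q2R_Qmake, Z2Pos.id by apply zfact_pos.
  rewrite <- pow_IZR, IZR_zfact. reflexivity.
Qed.

Fixpoint sin_poly (n : nat) : bpoly :=
  match n with
  | O => bmonomial 1 (taylor_coef 0 1)
  | S m => badd (sin_poly m) (bmonomial (2 * n + 1) (taylor_coef n (2 * n + 1)))
  end.

Fixpoint cos_poly (n : nat) : bpoly :=
  match n with
  | O => bmonomial 0 (taylor_coef 0 0)
  | S m => badd (cos_poly m) (bmonomial (2 * n) (taylor_coef n (2 * n)))
  end.

Lemma beval_sin_poly n u v : beval (sin_poly n) u v = sin_approx u n.
Proof.
  induction n as [|n IH]; cbn [sin_poly];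
    rewrite ?beval_add, ?IH, beval_monomial, Q2R_taylor_coef; unfold sin_approx.
  - unfold sin_term; simpl; field.
  - simpl sum_f_R0 at 2; unfold sin_term. field. apply not_0_INR, Factorial.fact_neq_0.
Qed.

Lemma beval_cos_poly n u v : beval (cos_poly n) u v = cos_approx u n.
Proof.
  induction n as [|n IH]; cbn [cos_poly];
    rewrite ?beval_add, ?IH, beval_monomial, Q2R_taylor_coef; unfold cos_approx.
  - unfold cos_term; simpl; field.
  - simpl sum_f_R0 at 2; unfold cos_term. field. apply not_0_INR, Factorial.fact_neq_0.
Qed.

Fixpoint ueval_q (l : upoly) (x : Q) : Q :=
  match l with nil => 0%Q | c :: l' => Qred (c + x * ueval_q l' x) end.

Fixpoint beval_q (L : bpoly) (u v : Q) : Q :=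
  match L with nil => 0%Q | c :: L' => Qred (ueval_q c v + u * beval_q L' u v) end.

Lemma Q2R_ueval_q l x : Q2R (ueval_q l x) = ueval l (Q2R x).
Proof.
  induction l as [|c l IH]; simpl; [apply RMicromega.Q2R_0|].
  rewrite Q2R_red, Q2R_plus, Q2R_mult, IH; reflexivity.
Qed.

Lemma Q2R_beval_q L u v : Q2R (beval_q L u v) = beval L (Q2R u) (Q2R v).
Proof.
  induction L as [|c L IH]; simpl; [apply RMicromega.Q2R_0|].
  rewrite Q2R_red, Q2R_plus, Q2R_mult, IH, Q2R_ueval_q; reflexivity.
Qed.

Definition pi_lo : Q := 314159 # 100000.
Definition pi_eps : Q := 1 # 100000.

(* With [a = pi_lo / 4]: [sin a] is small enough that [cos (2 a) = 1 - 2 sin a ^ 2 > 0]. *)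
Lemma pi_lo_le_PI : Q2R pi_lo <= PI.
Proof.
  set (a := 314159 # 400000).
  assert (Ha : Q2R a = 314159 / 400000) by reflexivity.
  assert (Hsin : 0 <= sin (Q2R a) <= sin_approx (Q2R a) 6).
  { pose proof PI2_1. split; [apply sin_ge_0 | apply (sin_bound _ 2)]; rewrite Ha; lra. }
  assert (Hval : sin_approx (Q2R a) 6 = Q2R (beval_q (sin_poly 6) a 0)).
  { rewrite Q2R_beval_q, beval_sin_poly. reflexivity. }
  assert (Hq : (2 * beval_q (sin_poly 6) a 0 * beval_q (sin_poly 6) a 0 < 1)%Q).
  { apply QMicromega.Qlt_bool_iff. vm_compute. reflexivity. }
  apply Qlt_Rlt in Hq. rewrite !Q2R_mult, RMicromega.Q2R_1, <- Hval in Hq.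
  replace (Q2R 2) with 2 in Hq by (unfold Q2R; simpl; field).
  assert (Hcos : 0 < cos (2 * Q2R a)) by (rewrite cos_2a_sin; nra).
  pose proof (PI2_lower_bound (2 * Q2R a) ltac:(rewrite Ha; lra) Hcos).
  unfold pi_lo; rewrite Q2R_Qmake; rewrite Ha in *; lra.
Qed.

Lemma PI_le_pi_hi : PI <= Q2R pi_lo + Q2R pi_eps.
Proof.
  set (b := 19635 # 12500).
  assert (Hb : Q2R pi_lo + Q2R pi_eps = 2 * Q2R b).
  { unfold pi_lo, pi_eps, b; rewrite !Q2R_Qmake; field. }
  rewrite Hb. apply Rnot_lt_le; intros Hlt.
  assert (Hcos : 0 <= cos (Q2R b) <= cos_approx (Q2R b) 6).
  { assert (0 < Q2R b) by (unfold b; rewrite Q2R_Qmake; lra).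
    split; [apply cos_ge_0 | apply (cos_bound _ 2)]; lra. }
  assert (Hq : (beval_q (cos_poly 6) b 0 < 0)%Q).
  { apply QMicromega.Qlt_bool_iff. vm_compute. reflexivity. }
  apply Qlt_Rlt in Hq.
  rewrite Q2R_beval_q, RMicromega.Q2R_0, beval_cos_poly in Hq. lra.
Qed.

Lemma PI_bounds : 314159 / 100000 <= PI <= 314160 / 100000.
Proof.
  pose proof pi_lo_le_PI; pose proof PI_le_pi_hi.
  unfold pi_lo, pi_eps in *; rewrite !Q2R_Qmake in *; lra.
Qed.

(** * The polynomial certificates *)

(* Below, [u] is [t] (or [s = pi - t]) and [v] is pi. *)
Definition sin_lo := sin_poly 5.
Definition sin_hi := sin_poly 6.
Definition cos_lo := cos_poly 5.
Definition cos_hi := cos_poly 6.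
Definition versin_lo := bsub (bconst 1) cos_hi.
Definition versin_hi := bsub (bconst 1) cos_lo.

Definition sq_diff := bsub (bpow bX_v 2) (bpow bX_u 2).
Definition bv_minus_u := bsub bX_v bX_u.
Definition two_v_minus_u_sq := bpow (bsub (bmul (bconst 2) bX_v) bX_u) 2.

Definition num_low_poly : bpoly :=
  badd (bmul (bconst (1#12)) (bmul (bpow bX_v 4) (bpow bX_u 3)))
    (bmul (bconst (1#32))
       (bmul (bsub (bmul (bconst (8#15)) (bpow bX_v 4)) (bmul (bconst (16#3)) (bpow bX_v 2)))
          (bpow bX_u 5))).

Definition num_up_poly : bpoly :=
  badd (bmul (bconst (1#12)) (bmul (bpow bX_v 6) (bpow bX_u 3)))
    (bmul (bconst (1#32))
       (bmul (bsub (bconst 256) (bmul (bconst (8#3)) (bpow bX_v 4))) (bpow bX_u 5))).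

(* A [_minor] ([_major]) polynomial bounds [gap c_low t] ([low_]) or [- pi^2 gap c_up t]
   ([up_]) from below (above); the [_nearpi] ones are in [s = pi - t] and divided by [s^2]. *)
Definition low_near0_minor :=
  bsub (bmul (bpow sq_diff 2) (bsub bX_u sin_hi)) (bmul (badd (bconst 1) cos_hi) num_low_poly).
Definition low_near0_major :=
  bsub (bmul (bpow sq_diff 2) (bsub bX_u sin_lo)) (bmul (badd (bconst 1) cos_lo) num_low_poly).
Definition up_near0_minor :=
  bsub (bmul (badd (bconst 1) cos_lo) num_up_poly)
    (bmul (bpow bX_v 2) (bmul (bpow sq_diff 2) (bsub bX_u sin_lo))).
Definition low_nearpi_minor :=
  bsub (bmul two_v_minus_u_sq (bsub bv_minus_u sin_hi))
    (bmul (skipn 2 versin_hi) (bcomp num_low_poly bv_minus_u)).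
Definition up_nearpi_minor :=
  bsub (bmul (skipn 2 versin_lo) (bcomp num_up_poly bv_minus_u))
    (bmul (bpow bX_v 2) (bmul two_v_minus_u_sq (bsub bv_minus_u sin_lo))).
Definition up_nearpi_major :=
  bsub (bmul (skipn 2 versin_hi) (bcomp num_up_poly bv_minus_u))
    (bmul (bpow bX_v 2) (bmul two_v_minus_u_sq (bsub bv_minus_u sin_hi))).

Ltac beval_simpl :=
  repeat rewrite ?beval_sub, ?beval_add, ?beval_mul, ?beval_pow, ?beval_const,
    ?beval_X_u, ?beval_X_v, ?beval_comp, ?beval_sin_poly, ?beval_cos_poly;
  rewrite ?Q2R_Qmake.

Lemma beval_num_low t p :
  beval num_low_poly t p = p^4 * t^3 / 12 + (8 * p^4 / 15 - 16 * p^2 / 3) * t^5 / 32.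
Proof. unfold num_low_poly; beval_simpl; field. Qed.

Lemma beval_num_up t p :
  beval num_up_poly t p = p^6 * t^3 / 12 + (256 - 8 * p^4 / 3) * t^5 / 32.
Proof. unfold num_up_poly; beval_simpl; field. Qed.

Lemma beval_comp_v_minus_u L s p : beval (bcomp L bv_minus_u) s p = beval L (p - s) p.
Proof. rewrite beval_comp; unfold bv_minus_u; beval_simpl; reflexivity. Qed.

Lemma versin_hi_factor s p : 1 - cos_approx s 5 = s^2 * beval (skipn 2 versin_hi) s p.
Proof. rewrite <- beval_skipn by (vm_compute; reflexivity). unfold versin_hi, cos_lo; beval_simpl; field. Qed.

Lemma versin_lo_factor s p : 1 - cos_approx s 6 = s^2 * beval (skipn 2 versin_lo) s p.
Proof. rewrite <- beval_skipn by (vm_compute; reflexivity). unfold versin_lo, cos_hi; beval_simpl; field. Qed.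

Lemma beval_low_near0_minor t p :
  beval low_near0_minor t p
  = (p^2 - t^2)^2 * (t - sin_approx t 6) - (1 + cos_approx t 6) * beval num_low_poly t p.
Proof. unfold low_near0_minor, sq_diff, sin_hi, cos_hi; beval_simpl; field. Qed.

Lemma beval_low_near0_major t p :
  beval low_near0_major t p
  = (p^2 - t^2)^2 * (t - sin_approx t 5) - (1 + cos_approx t 5) * beval num_low_poly t p.
Proof. unfold low_near0_major, sq_diff, sin_lo, cos_lo; beval_simpl; field. Qed.

Lemma beval_up_near0_minor t p :
  beval up_near0_minor t p
  = (1 + cos_approx t 5) * beval num_up_poly t p - p^2 * (p^2 - t^2)^2 * (t - sin_approx t 5).
Proof. unfold up_near0_minor, sq_diff, sin_lo, cos_lo; beval_simpl; field. Qed.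

Lemma beval_low_nearpi_minor s p :
  beval low_nearpi_minor s p
  = (2 * p - s)^2 * (p - s - sin_approx s 6)
    - beval (skipn 2 versin_hi) s p * beval num_low_poly (p - s) p.
Proof.
  unfold low_nearpi_minor; rewrite <- beval_comp_v_minus_u.
  unfold two_v_minus_u_sq, bv_minus_u, sin_hi; beval_simpl; field.
Qed.

Lemma beval_up_nearpi_minor s p :
  beval up_nearpi_minor s p
  = beval (skipn 2 versin_lo) s p * beval num_up_poly (p - s) p
    - p^2 * (2 * p - s)^2 * (p - s - sin_approx s 5).
Proof.
  unfold up_nearpi_minor; rewrite <- beval_comp_v_minus_u.
  unfold two_v_minus_u_sq, bv_minus_u, sin_lo; beval_simpl; field.
Qed.

Lemma beval_up_nearpi_major s p :
  beval up_nearpi_major s p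
  = beval (skipn 2 versin_hi) s p * beval num_up_poly (p - s) p
    - p^2 * (2 * p - s)^2 * (p - s - sin_approx s 6).
Proof.
  unfold up_nearpi_major; rewrite <- beval_comp_v_minus_u.
  unfold two_v_minus_u_sq, bv_minus_u, sin_hi; beval_simpl; field.
Qed.

Ltac positive_on_boxes bs :=
  apply (pos_on_boxes_spec _ pi_lo pi_eps 0%Q bs);
  [ vm_cast_no_check (eq_refl true)
  | pose proof pi_lo_le_PI; pose proof PI_le_pi_hi; lra
  | cbn [last]; rewrite RMicromega.Q2R_0, ?Q2R_Qmake; lra ].

(* The certificates vanish at [u = 0]; the box bound needs [u^k] divided out first. *)
Ltac factor_out k := rewrite (beval_skipn k) by (vm_compute; reflexivity).

Lemma low_near0_minor_pos t : 0 < t <= 16/10 -> 0 < beval low_near0_minor t PI.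
Proof.
  intros Ht; factor_out 7%nat. apply Rmult_lt_0_compat; [apply pow_lt; lra|].
  positive_on_boxes ((16#10) :: nil).
Qed.

Lemma up_near0_minor_pos t : 0 < t <= 16/10 -> 0 < beval up_near0_minor t PI.
Proof.
  intros Ht; factor_out 5%nat. apply Rmult_lt_0_compat; [apply pow_lt; lra|].
  positive_on_boxes ((16#10) :: nil).
Qed.

Lemma low_nearpi_minor_pos s : 0 <= s <= 16/10 -> 0 < beval low_nearpi_minor s PI.
Proof.
  intros Hs.
  positive_on_boxes ((2#10) :: (4#10) :: (6#10) :: (8#10) :: (10#10) :: (12#10) :: (14#10) :: (16#10) :: nil).
Qed.

Lemma up_nearpi_minor_pos s : 0 < s <= 16/10 -> 0 < beval up_nearpi_minor s PI.
Proof.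
  intros Hs; factor_out 1%nat. apply Rmult_lt_0_compat; [lra|].
  positive_on_boxes ((4#10) :: (8#10) :: (1#1) :: (12#10) :: (14#10) :: (16#10) :: nil).
Qed.

Lemma low_near0_major_le t : 0 < t <= 1 -> beval low_near0_major t PI <= t^7.
Proof.
  intros Ht; factor_out 7%nat.
  assert (H : 0 < beval (bsub (bconst 1) (skipn 7 low_near0_major)) t PI)
    by positive_on_boxes ((1#1) :: nil).
  rewrite beval_sub, beval_const, RMicromega.Q2R_1 in H.
  rewrite <- (Rmult_1_r (t^7)) at 2.
  apply Rmult_le_compat_l; [apply pow_le |]; lra.
Qed.

Lemma up_nearpi_major_le s : 0 < s <= 1 -> beval up_nearpi_major s PI <= 12 * s.
Proof.
  intros Hs; factor_out 1%nat.
  assert (H : 0 < beval (bsub (bconst 12) (skipn 1 up_nearpi_major)) s PI)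
    by positive_on_boxes ((1#16) :: (1#8) :: (1#4) :: (1#2) :: (1#1) :: nil).
  rewrite beval_sub, beval_const in H.
  replace (Q2R 12) with 12 in H by (unfold Q2R; simpl; field).
  rewrite pow_1, (Rmult_comm 12). apply Rmult_le_compat_l; lra.
Qed.

(** * The inequalities in the variable [t = 2 x] *)

Definition bnd_num (c t : R) : R := PI^4 * t^3 / 12 + c * t^5 / 32.

Definition gap (c t : R) : R := (PI^2 - t^2)^2 * (t - sin t) - (1 + cos t) * bnd_num c t.

Lemma bnd_num_low_eq t : bnd_num c_low t = beval num_low_poly t PI.
Proof. rewrite beval_num_low; unfold bnd_num, c_low; ring. Qed.

Lemma bnd_num_up_eq t : PI^2 * bnd_num c_up t = beval num_up_poly t PI.
Proof. rewrite beval_num_up; unfold bnd_num, c_up. pose proof PI_RGT_0. field. lra. Qed.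

Lemma bnd_num_low_nonneg t : 0 <= t <= PI -> 0 <= bnd_num c_low t.
Proof.
  intros Ht. pose proof PI_bounds.
  replace (bnd_num c_low t) with (t^3 * PI^2 * (5 * PI^2 + t^2 * (PI^2 - 10)) / 60)
    by (unfold bnd_num, c_low; field).
  assert (t^2 <= PI^2) by nra.
  assert (9 <= PI^2 <= 10) by nra.
  assert (0 <= (PI^2 - t^2) * (10 - PI^2)) by (apply Rmult_le_pos; lra).
  assert (0 <= 5 * PI^2 + t^2 * (PI^2 - 10)) by nra.
  assert (0 <= t^3 * PI^2) by (apply Rmult_le_pos; [apply pow_le | ]; nra).
  unfold Rdiv; apply Rmult_le_pos; [apply Rmult_le_pos|]; lra.
Qed.

Lemma num_up_poly_nonneg t : 0 <= t <= PI -> 0 <= beval num_up_poly t PI.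
Proof.
  intros Ht. pose proof PI_bounds. rewrite beval_num_up.
  replace (PI^6 * t^3 / 12 + (256 - 8 * PI^4 / 3) * t^5 / 32)
    with (t^3 * (PI^4 * (PI^2 - t^2) / 12 + 8 * t^2)) by field.
  assert (t^2 <= PI^2) by nra.
  assert (0 <= PI^4 * (PI^2 - t^2)) by (apply Rmult_le_pos; [apply pow_le|]; lra).
  apply Rmult_le_pos; [apply pow_le|]; nra.
Qed.

Lemma gap_c_shift c d t : gap (c + d) t = gap c t - d * (t^5 / 32 * (1 + cos t)).
Proof. unfold gap, bnd_num; field. Qed.

Lemma gap_reflect c s :
  gap c (PI - s) = s^2 * (2 * PI - s)^2 * (PI - s - sin s) - (1 - cos s) * bnd_num c (PI - s).
Proof. unfold gap; rewrite sin_PI_x, Rtrigo_facts.cos_pi_minus; ring. Qed.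

Lemma taylor_replace_le D N x y y' z z' :
  0 <= D -> 0 <= N -> y <= y' -> z <= z' -> D * (x - y') - z' * N <= D * (x - y) - z * N.
Proof. intros. nra. Qed.

Lemma sin_cos_taylor_bounds t : 0 <= t <= PI / 2 ->
  sin_approx t 5 <= sin t <= sin_approx t 6 /\ cos_approx t 5 <= cos t <= cos_approx t 6.
Proof. intros Ht. split; [apply (sin_bound _ 2) | apply (cos_bound _ 2)]; lra. Qed.

Lemma gap_low_pos_near0 t : 0 < t <= PI / 2 -> 0 < gap c_low t.
Proof.
  intros Ht. pose proof PI_bounds.
  destruct (sin_cos_taylor_bounds t ltac:(lra)) as [Hsin Hcos].
  pose proof (low_near0_minor_pos t ltac:(lra)) as Hcert.
  rewrite beval_low_near0_minor, <- bnd_num_low_eq in Hcert.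
  eapply Rlt_le_trans; [exact Hcert|]. unfold gap.
  apply taylor_replace_le; [apply pow2_ge_0 | apply bnd_num_low_nonneg | |]; lra.
Qed.

Lemma gap_low_pos_nearpi t : PI / 2 <= t < PI -> 0 < gap c_low t.
Proof.
  intros Ht. pose proof PI_bounds.
  replace t with (PI - (PI - t)) by ring. set (s := PI - t).
  destruct (sin_cos_taylor_bounds s ltac:(unfold s; lra)) as [Hsin Hcos].
  pose proof (low_nearpi_minor_pos s ltac:(unfold s; lra)) as Hcert.
  rewrite beval_low_nearpi_minor, <- bnd_num_low_eq in Hcert.
  assert (Hs2 : 0 < s^2) by (apply pow_lt; unfold s; lra).
  rewrite gap_reflect.
  eapply Rlt_le_trans with (s^2 * ((2 * PI - s)^2 * (PI - s - sin_approx s 6)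
    - beval (skipn 2 versin_hi) s PI * bnd_num c_low (PI - s))); [nra|].
  replace (s^2 * _) with (s^2 * (2 * PI - s)^2 * (PI - s - sin_approx s 6)
    - (1 - cos_approx s 5) * bnd_num c_low (PI - s)) by (rewrite (versin_hi_factor s PI); ring).
  apply taylor_replace_le; [| apply bnd_num_low_nonneg; unfold s | |]; try lra.
  apply Rmult_le_pos; apply pow2_ge_0.
Qed.

Lemma gap_up_neg_near0 t : 0 < t <= PI / 2 -> gap c_up t < 0.
Proof.
  intros Ht. pose proof PI_bounds.
  destruct (sin_cos_taylor_bounds t ltac:(lra)) as [Hsin Hcos].
  pose proof (up_near0_minor_pos t ltac:(lra)) as Hcert.
  rewrite beval_up_near0_minor, <- bnd_num_up_eq in Hcert.
  assert (Hpi2 : 0 < PI^2) by nra.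
  apply (Rmult_lt_reg_l (PI^2)); [exact Hpi2|]. rewrite Rmult_0_r.
  replace (PI^2 * gap c_up t)
    with (PI^2 * (PI^2 - t^2)^2 * (t - sin t) - (1 + cos t) * (PI^2 * bnd_num c_up t))
    by (unfold gap; ring).
  eapply Rle_lt_trans; [apply taylor_replace_le with (y' := sin t) (z' := 1 + cos t)|].
  - apply Rmult_le_pos; [lra | apply pow2_ge_0].
  - rewrite bnd_num_up_eq; apply num_up_poly_nonneg; lra.
  - exact (proj1 Hsin).
  - exact (Rplus_le_compat_l 1 _ _ (proj1 Hcos)).
  - lra.
Qed.

Lemma gap_up_neg_nearpi t : PI / 2 <= t < PI -> gap c_up t < 0.
Proof.
  intros Ht. pose proof PI_bounds.
  replace t with (PI - (PI - t)) by ring. set (s := PI - t).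
  destruct (sin_cos_taylor_bounds s ltac:(unfold s; lra)) as [Hsin Hcos].
  pose proof (up_nearpi_minor_pos s ltac:(unfold s; lra)) as Hcert.
  rewrite beval_up_nearpi_minor, <- bnd_num_up_eq in Hcert.
  assert (Hs2 : 0 < s^2) by (apply pow_lt; unfold s; lra).
  assert (Hpi2 : 0 < PI^2) by nra.
  apply (Rmult_lt_reg_l (PI^2)); [exact Hpi2|]. rewrite Rmult_0_r, gap_reflect.
  replace (PI^2 * _) with (PI^2 * (s^2 * (2 * PI - s)^2) * (PI - s - sin s)
    - (1 - cos s) * (PI^2 * bnd_num c_up (PI - s))) by ring.
  eapply Rle_lt_trans;
    [apply taylor_replace_le with (y := sin_approx s 5) (z := 1 - cos_approx s 6)|].
  - apply Rmult_le_pos; [lra|]. apply Rmult_le_pos; apply pow2_ge_0.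
  - rewrite bnd_num_up_eq; apply num_up_poly_nonneg; unfold s; lra.
  - lra.
  - lra.
  - rewrite (versin_lo_factor s PI). nra.
Qed.

Lemma gap_low_pos t : 0 < t < PI -> 0 < gap c_low t.
Proof.
  intros Ht. destruct (Rle_dec t (PI / 2)).
  - apply gap_low_pos_near0; lra.
  - apply gap_low_pos_nearpi; lra.
Qed.

Lemma gap_up_neg t : 0 < t < PI -> gap c_up t < 0.
Proof.
  intros Ht. destruct (Rle_dec t (PI / 2)).
  - apply gap_up_neg_near0; lra.
  - apply gap_up_neg_nearpi; lra.
Qed.

(** * Optimality of the constants *)

Lemma gap_low_le_pow7 t : 0 < t <= 1 -> gap c_low t <= t^7.
Proof.
  intros Ht. pose proof PI_bounds.
  destruct (sin_cos_taylor_bounds t ltac:(lra)) as [Hsin Hcos].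
  eapply Rle_trans; [|apply low_near0_major_le; exact Ht].
  rewrite beval_low_near0_major, <- bnd_num_low_eq. unfold gap.
  apply taylor_replace_le; [apply pow2_ge_0 | apply bnd_num_low_nonneg | |]; lra.
Qed.

Lemma gap_up_ge_nearpi s : 0 < s <= 1 -> - 12 * s^3 <= PI^2 * gap c_up (PI - s).
Proof.
  intros Hs. pose proof PI_bounds.
  destruct (sin_cos_taylor_bounds s ltac:(lra)) as [Hsin Hcos].
  pose proof (up_nearpi_major_le s Hs) as Hcert.
  rewrite beval_up_nearpi_major, <- bnd_num_up_eq in Hcert.
  rewrite gap_reflect.
  replace (PI^2 * _) with (PI^2 * (s^2 * (2 * PI - s)^2) * (PI - s - sin s)
    - (1 - cos s) * (PI^2 * bnd_num c_up (PI - s))) by ring.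
  eapply Rle_trans;
    [|apply taylor_replace_le with (y' := sin_approx s 6) (z' := 1 - cos_approx s 5)].
  - rewrite (versin_hi_factor s PI).
    assert (0 < s^2) by (apply pow_lt; lra). nra.
  - apply Rmult_le_pos; [nra|]. apply Rmult_le_pos; apply pow2_ge_0.
  - rewrite bnd_num_up_eq; apply num_up_poly_nonneg; lra.
  - lra.
  - lra.
Qed.

Lemma c_shift_weight_near0 t : 0 < t <= 1 -> t^5 / 32 <= t^5 / 32 * (1 + cos t).
Proof.
  intros Ht. pose proof PI2_1.
  assert (0 <= cos t) by (apply cos_ge_0; lra).
  assert (0 < t^5) by (apply pow_lt; lra). nra.
Qed.

Lemma c_shift_weight_nearpi s : 0 < s <= 1 ->
  s^2 / 4 <= (PI - s)^5 / 32 * (1 + cos (PI - s)).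
Proof.
  intros Hs. pose proof PI_bounds. pose proof PI2_1.
  rewrite Rtrigo_facts.cos_pi_minus.
  pose proof (proj2 (cos_bound s 0 ltac:(lra) ltac:(lra))) as Hcos.
  replace (cos_approx s (2 * (0 + 1))) with (1 - s^2 / 2 + s^4 / 24) in Hcos
    by (unfold cos_approx, cos_term; simpl; field).
  assert (Hs2 : 0 < s^2 <= 1) by (split; [apply pow_lt|]; nra).
  assert (s^4 <= s^2) by (replace (s^4) with (s^2 * s^2) by ring; nra).
  assert (Ht5 : 32 <= (PI - s)^5) by (replace 32 with (2^5) by ring; apply pow_incr; lra).
  nra.
Qed.

Lemma gap_above_c_low c : c_low < c -> exists t, 0 < t < PI /\ gap c t <= 0.
Proof.
  intros Hc. pose proof PI_bounds. set (d := c - c_low).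
  set (t := Rmin 1 (d / 32)).
  assert (Ht : 0 < t <= 1 /\ t <= d / 32)
    by (unfold t, d; repeat split; [apply Rmin_glb_lt | apply Rmin_l | apply Rmin_r]; lra).
  exists t; split; [lra|].
  replace c with (c_low + d) by (unfold d; ring). rewrite gap_c_shift.
  pose proof (gap_low_le_pow7 t (proj1 Ht)).
  pose proof (c_shift_weight_near0 t (proj1 Ht)).
  assert (t^7 <= d * (t^5 / 32)).
  { replace (t^7) with (t^5 * (t * t)) by ring.
    assert (t * t <= d / 32) by nra.
    assert (0 < t^5) by (apply pow_lt; lra). nra. }
  assert (d * (t^5 / 32) <= d * (t^5 / 32 * (1 + cos t)))
    by (apply Rmult_le_compat_l; unfold d; lra).
  lra.
Qed.

Lemma gap_below_c_up c : c < c_up -> exists t, 0 < t < PI /\ 0 <= gap c t.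
Proof.
  intros Hc. pose proof PI_bounds. set (d := c_up - c).
  set (s := Rmin 1 (d / 8)).
  assert (Hs : 0 < s <= 1 /\ s <= d / 8)
    by (unfold s, d; repeat split; [apply Rmin_glb_lt | apply Rmin_l | apply Rmin_r]; lra).
  exists (PI - s); split; [lra|].
  replace c with (c_up + - d) by (unfold d; ring). rewrite gap_c_shift.
  pose proof (gap_up_ge_nearpi s (proj1 Hs)).
  pose proof (c_shift_weight_nearpi s (proj1 Hs)).
  set (W := (PI - s)^5 / 32 * (1 + cos (PI - s))) in *.
  assert (9 <= PI^2) by nra.
  assert (0 < s^2) by (apply pow_lt; lra).
  assert (12 * s^3 <= 12 * (d / 8) * s^2) by (replace (s^3) with (s * s^2) by ring; nra).
  assert (9 * (d * (s^2 / 4)) <= PI^2 * (d * W))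
    by (apply Rmult_le_compat; try apply Rmult_le_compat_l; unfold d in *; nra).
  apply (Rmult_le_reg_l (PI^2)); [lra|].
  replace (PI^2 * (gap c_up (PI - s) - - d * W)) with (PI^2 * gap c_up (PI - s) + PI^2 * (d * W))
    by ring.
  nra.
Qed.

Lemma fsec_half_angle x : 0 < x < PI / 2 ->
  fsec x = (2 * x - sin (2 * x)) / (1 + cos (2 * x)) /\ 0 < 1 + cos (2 * x).
Proof.
  intros Hx. assert (Hc : 0 < cos x) by (apply cos_gt_0; lra).
  assert (Hc2 : 0 < cos x * cos x) by nra.
  rewrite sin_2a, cos_2a_cos. unfold fsec, tan. split; [field | ]; lra.
Qed.

Lemma bnd_double c x : bnd c x = bnd_num c (2 * x) / (PI^2 - (2 * x)^2)^2.
Proof. unfold bnd, bnd_num. replace (4 * x^2) with ((2 * x)^2) by ring. f_equal; field. Qed.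

Lemma Rdiv_lt_Rdiv_iff a b c d : 0 < b -> 0 < d -> (a / b < c / d <-> a * d < c * b).
Proof.
  intros Hb Hd.
  assert (Ha : a * d = a / b * (b * d)) by (field; lra).
  assert (Hc : c * b = c / d * (b * d)) by (field; lra).
  rewrite Ha, Hc; split; intros H.
  - apply Rmult_lt_compat_r; [nra | exact H].
  - apply (Rmult_lt_reg_r (b * d)); [nra | exact H].
Qed.

Lemma bnd_lt_fsec_iff c x : 0 < x < PI / 2 -> (bnd c x < fsec x <-> 0 < gap c (2 * x)).
Proof.
  intros Hx. pose proof PI_bounds.
  destruct (fsec_half_angle x Hx) as [Hf Hcos]. rewrite Hf, bnd_double.
  rewrite Rdiv_lt_Rdiv_iff by (try apply pow_lt; nra).
  unfold gap; split; intros; lra.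
Qed.

Lemma fsec_lt_bnd_iff c x : 0 < x < PI / 2 -> (fsec x < bnd c x <-> gap c (2 * x) < 0).
Proof.
  intros Hx. pose proof PI_bounds.
  destruct (fsec_half_angle x Hx) as [Hf Hcos]. rewrite Hf, bnd_double.
  rewrite Rdiv_lt_Rdiv_iff by (try apply pow_lt; nra).
  unfold gap; split; intros; lra.
Qed.

Theorem mainTheorem20 :
  (forall x : R, 0 < x < PI / 2 ->
     bnd c_low x < fsec x < bnd c_up x) /\
  (forall c : R, c > c_low ->
     exists x : R, 0 < x < PI / 2 /\ ~ (bnd c x < fsec x)) /\
  (forall c : R, c < c_up ->
     exists x : R, 0 < x < PI / 2 /\ ~ (fsec x < bnd c x)).
Proof.
  split; [|split].
  - intros x Hx. rewrite bnd_lt_fsec_iff, fsec_lt_bnd_iff by exact Hx.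
    split; [apply gap_low_pos | apply gap_up_neg]; lra.
  - intros c Hc. destruct (gap_above_c_low c Hc) as [t [Ht Hgap]].
    exists (t / 2); split; [lra|].
    rewrite bnd_lt_fsec_iff by lra. replace (2 * (t / 2)) with t by field. lra.
  - intros c Hc. destruct (gap_below_c_up c Hc) as [t [Ht Hgap]].
    exists (t / 2); split; [lra|].
    rewrite fsec_lt_bnd_iff by lra. replace (2 * (t / 2)) with t by field. lra.
Qed.
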